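(* Let $A,B\in\mathrm{SL}_2\mathbb{Z}$ be noncommuting, well oriented, with $2\le\mathrm{tr}(A)<\mathrm{tr}(B)$. If $[ab]<[b^2]$, then $[ab^k]<[b^{k+1}]$ for every $k\ge1$.
   Context: Words are finite strings over $\{a,b\}$; $\phi$ is the homomorphism with $\phi(a)=A,\phi(b)=B$, and $[w]=\mathrm{tr}(\phi(w))$. Fixed points are for the Möbius action on $\partial\mathcal{H}=\mathbb{P}^1\mathbb{R}$; $\alpha^\pm$ ($\beta^\pm$) are the attracting/repelling fixed points of $A$ ($B$), both equal to the unique fixed point if parabolic. With $\partial\mathcal{H}$ cyclically ordered and $[\alpha,\beta]$ the closed counterclockwise interval from $\alpha$ to $\beta$, let $I^+=\{\alpha^+\}$ if $\alpha^+=\beta^+$, and otherwise the one of $[\alpha^+,\beta^+],[\beta^+,\alpha^+]$ mapped into itself by both $A$ and $B$ (if it exists); define $I^-$ likewise with $A^{-1},B^{-1},\alpha^-,\beta^-$. The pair is coherently oriented if both exist, and well oriented if $A,B$ is coherently oriented but $A,B^{-1}$ is not. *)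

From mathcomp Require Import all_boot all_order all_algebra.
From mathcomp Require Import reals.
Set Implicit Arguments. Unset Strict Implicit. Unset Printing Implicit Defensive.
Import Order.TTheory GRing.Theory Num.Theory.
Local Open Scope ring_scope.

(* The boundary of the hyperbolic plane, P^1(R) = R u {oo}; None = oo. *)
Definition P1 (R : Type) := option R.

Definition mob (R : realType) (M : 'M[R]_2) (z : P1 R) : P1 R :=
  let a := M ord0 ord0 in let b := M ord0 ord_max in
  let c := M ord_max ord0 in let d := M ord_max ord_max in
  match z with
  | Some x => if c * x + d == 0 then None else Some ((a * x + b) / (c * x + d))
  | None => if c == 0 then None else Some (a / c)
  end.

(* Eigenvalue of M on the line represented by z (meaningful when z is fixed):
   M (x,1)^T = (c x + d) (x,1)^T, and M (1,0)^T = a (1,0)^T when c = 0.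
   The derivative of the Moebius map at a finite fixed point x is
   1/(c x + d)^2, so the fixed point is attracting iff this eigenvalue has
   modulus > 1. *)
Definition mfactor (R : realType) (M : 'M[R]_2) (z : P1 R) : R :=
  match z with
  | Some x => M ord_max ord0 * x + M ord_max ord_max
  | None => M ord0 ord0
  end.

Definition attracting (R : realType) (M : 'M[R]_2) (p : P1 R) : Prop :=
  mob M p = p /\ (`|\tr M| = 2 \/ 1 < `|mfactor M p|).

Definition repelling (R : realType) (M : 'M[R]_2) (p : P1 R) : Prop :=
  mob M p = p /\ (`|\tr M| = 2 \/ `|mfactor M p| < 1).

(* z lies in the closed counterclockwise interval [x, y] of P^1(R)
   (counterclockwise = increasing direction along R, passing through oo).
   Only used for x <> y. *)
Definition in_ccw (R : realType) (x y z : P1 R) : bool :=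
  match x, y with
  | Some a, Some b =>
      if a <= b then (match z with Some t => (a <= t) && (t <= b) | None => false end)
      else (match z with Some t => (a <= t) || (t <= b) | None => true end)
  | Some a, None => match z with Some t => a <= t | None => true end
  | None, Some b => match z with Some t => t <= b | None => true end
  | None, None => true
  end.

Definition stable (R : realType) (M N : 'M[R]_2) (x y : P1 R) : Prop :=
  forall z, in_ccw x y z -> in_ccw x y (mob M z) /\ in_ccw x y (mob N z).

Definition I_exists (R : realType) (M N : 'M[R]_2) (p q : P1 R) : Prop :=
  p = q \/ (p <> q /\ (stable M N p q \/ stable M N q p)).

Definition Iplus_exists (R : realType) (A B : 'M[R]_2) : Prop :=
  exists a b, attracting A a /\ attracting B b /\ I_exists A B a b.

Definition Iminus_exists (R : realType) (A B : 'M[R]_2) : Prop :=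
  exists a b, repelling A a /\ repelling B b /\ I_exists (invmx A) (invmx B) a b.

Definition coherently_oriented (R : realType) (A B : 'M[R]_2) : Prop :=
  Iplus_exists A B /\ Iminus_exists A B.

Definition well_oriented (R : realType) (A B : 'M[R]_2) : Prop :=
  coherently_oriented A B /\ ~ coherently_oriented A (invmx B).

Definition toR (R : realType) (M : 'M[int]_2) : 'M[R]_2 := map_mx (fun z => z%:~R) M.

From mathcomp Require Import all_boot all_order all_algebra.
From mathcomp Require Import reals.
From mathcomp Require Import ring.
Import Order.TTheory GRing.Theory Num.Theory.
Local Open Scope ring_scope.

(* By Cayley-Hamilton, every sequence [tr (X B^n)] with [det B = 1] obeys
   [u (n+2) = tr B * u (n+1) - u n].  Take [u n = tr ((B - A) B^n)], so that
   the claim is [u k > 0].  Here [u 0 = tr B - tr A <= tr B - 1] and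
   [u 1 = [b^2] - [ab] >= 1] by integrality, whence [u 1 <= u 2]; as
   [tr B >= 2], a positive nondecreasing start of such a recurrence stays
   positive. *)

Lemma mx2_sqr (R : comNzRingType) (B : 'M[R]_2) :
  B ^+ 2 = \tr B *: B - (\det B)%:M.
Proof.
have := Cayley_Hamilton B.
rewrite -[char_poly B]coefK poly_def size_char_poly rmorph_sum /=.
rewrite !big_ord_recr big_ord0 /= add0r !linearZ /= !rmorphXn /= horner_mx_X.
have /monicP := char_poly_monic B; rewrite lead_coefE size_char_poly => ->.
rewrite (char_poly_trace B) // char_poly_det sqrrN expr1n mul1r expr0 expr1.
rewrite scale1r scalemx1 scaleNr => /eqP.
by rewrite addrC addrA addr_eq0 opprK => /eqP <-; rewrite addrK.
Qed.

Lemma mxtrace_mul_exprSS (R : comNzRingType) (X B : 'M[R]_2) n :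
  \tr (X * B ^+ n.+2) = \tr B * \tr (X * B ^+ n.+1) - \det B * \tr (X * B ^+ n).
Proof.
have -> : B ^+ n.+2 = \tr B *: B ^+ n.+1 - \det B *: B ^+ n.
  rewrite -[n.+2]addn2 exprD mx2_sqr mulrBr -scalerAr -exprSr.
  by rewrite -mulmxE mul_mx_scalar.
by rewrite mulrBr -!scalerAr linearB !linearZ.
Qed.

Lemma chebyshev_rec_gt0 {R : numDomainType} {t : R} {v : nat -> R} :
  2 <= t -> (forall n, v n.+2 = t * v n.+1 - v n) ->
  0 < v 0%N -> v 0%N <= v 1%N -> forall n, 0 < v n.
Proof.
move=> t_ge2 v_rec v0_gt0 v01.
suff inv n : 0 < v n /\ v n <= v n.+1 by move=> n; case: (inv n).
elim: n => [|n [vn_gt0 vn_le]]; first by [].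
have vSn_gt0 := lt_le_trans vn_gt0 vn_le.
split=> //; rewrite v_rec -subr_ge0.
have -> : t * v n.+1 - v n - v n.+1 = (t - 2) * v n.+1 + (v n.+1 - v n) by ring.
by rewrite addr_ge0 ?subr_ge0 // mulr_ge0 ?subr_ge0 // ltW.
Qed.

Theorem lemma5p4 (R : realType) (A B : 'M[int]_2) :
  \det A = 1 -> \det B = 1 ->
  A *m B != B *m A ->
  well_oriented (toR R A) (toR R B) ->
  2 <= \tr A -> \tr A < \tr B ->
  \tr (A *m B) < \tr (B ^+ 2) ->
  forall k : nat, (1 <= k)%N -> \tr (A *m B ^+ k) < \tr (B ^+ k.+1).
Proof.
move=> _ detB _ _ trA_ge2 trA_lt_trB; rewrite !mulmxE => trAB_lt [//|k] _.
have trB_ge2 : 2 <= \tr B := le_trans trA_ge2 (ltW trA_lt_trB).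
pose u n := \tr ((B - A) * B ^+ n).
have u_rec n : u n.+2 = \tr B * u n.+1 - u n.
  by rewrite /u mxtrace_mul_exprSS detB mul1r.
have u_exprS n : u n = \tr (B ^+ n.+1) - \tr (A * B ^+ n).
  by rewrite /u mulrBl linearB -exprS.
have u0_le : u 0%N <= \tr B - 1.
  by rewrite u_exprS expr0 mulr1 expr1 lerD2l lerN2 (le_trans _ trA_ge2).
have u1_gt0 : 0 < u 1%N by rewrite u_exprS expr1 subr_gt0.
have u12 : u 1%N <= u 2%N.
  rewrite u_rec -subr_ge0.
  have -> : \tr B * u 1%N - u 0%N - u 1%N
            = (\tr B - 1) * (u 1%N - 1) + (\tr B - 1 - u 0%N) by ring.
  rewrite addr_ge0 ?mulr_ge0 ?subr_ge0 -?gtz0_ge1 //.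
  exact: lt_le_trans trB_ge2.
have := chebyshev_rec_gt0 trB_ge2 (fun n => u_rec n.+1) u1_gt0 u12 k.
by rewrite u_exprS subr_gt0.
Qed.
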